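(* For any algebra $A$ we have $\mathfrak{P}^{\mathrm{c}}(A)=\mathrm{p}^{-1}\big(\mathfrak{P}^{\mathrm{c}}(A_{\mathrm{com}})\big)$, where $\mathrm{p}:A\to A_{\mathrm{com}}$ is the canonical projection onto the commutativization of $A$.
   Context: Fix a field $\mathbb{F}$; algebras are associative $\mathbb{F}$-algebras, not necessarily unital or commutative. $A_{\mathrm{com}}$ is the largest commutative quotient of $A$ (the quotient by the ideal generated by all commutators). For an algebra $A$, $\mathfrak{P}^{\mathrm{c}}(A)$ is the set of $a\in A$ such that for every commutative algebra $C$ and every algebra morphism $\varphi:A\to C[x]$, $\varphi(a)$ is a constant polynomial (lies in $C\subseteq C[x]$). (The paper defines it via a universal pro-algebra $\mathfrak{M}^{\mathrm{c}}_{A,\mathbb{F}[x]}$ and proves it equals this set.) *)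

From HB Require Import structures.
From mathcomp Require Import all_boot all_order all_algebra.
Set Implicit Arguments. Unset Strict Implicit. Unset Printing Implicit Defensive.
Import GRing.Theory.
Local Open Scope ring_scope.

(* Associative F-algebras, NOT necessarily unital nor commutative:
   an F-vector space with an associative F-bilinear multiplication. *)
Record algebra (F : fieldType) := Algebra {
  acar :> lmodType F;
  amul : acar -> acar -> acar;
  amulA : forall x y z, amul x (amul y z) = amul (amul x y) z;
  amulDl : forall x y z, amul (x + y) z = amul x z + amul y z;
  amulDr : forall x y z, amul x (y + z) = amul x y + amul x z;
  amulZl : forall (k : F) x y, amul (k *: x) y = k *: amul x y;
  amulZr : forall (k : F) x y, amul x (k *: y) = k *: amul x y
}.
Arguments amul {F} a _ _.

Definition is_commutative (F : fieldType) (C : algebra F) : Prop :=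
  forall x y : C, amul C x y = amul C y x.

Definition is_alg_morph (F : fieldType) (A B : algebra F) (f : A -> B) : Prop :=
  (forall (k : F) (x y : A), f (k *: x + y) = k *: f x + f y) /\
  (forall x y : A, f (amul A x y) = amul B (f x) (f y)).

(* The polynomial algebra C[x] over a (non-unital, commutative) algebra C is
   the algebra of finitely supported coefficient sequences nat -> C with
   coefficientwise linear structure and convolution product
   (c * d)_n = \sum_{i+j=n} c_i d_j. *)
Definition poly_morph (F : fieldType) (A C : algebra F) (phi : A -> nat -> C) : Prop :=
  [/\ (forall a : A, exists N : nat, forall n, (N <= n)%N -> phi a n = 0),
      (forall (k : F) (a b : A) (n : nat), phi (k *: a + b) n = k *: phi a n + phi b n)
    & (forall (a b : A) (n : nat),
         phi (amul A a b) n = \sum_(i < n.+1) amul C (phi a i) (phi b (n - i)%N))].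

Definition is_constant_poly (F : fieldType) (C : algebra F) (c : nat -> C) : Prop :=
  forall n : nat, (0 < n)%N -> c n = 0.

Definition Pc (F : fieldType) (A : algebra F) (a : A) : Prop :=
  forall (C : algebra F), is_commutative C ->
  forall phi : A -> nat -> C, poly_morph phi -> is_constant_poly (phi a).

Definition is_ideal (F : fieldType) (A : algebra F) (I : A -> Prop) : Prop :=
  [/\ I 0,
      (forall (k : F) x y, I x -> I y -> I (k *: x + y)),
      (forall x y, I y -> I (amul A x y))
    & (forall x y, I x -> I (amul A x y))].

Definition in_comm_ideal (F : fieldType) (A : algebra F) (a : A) : Prop :=
  forall I : A -> Prop, is_ideal I ->
  (forall x y : A, I (amul A x y - amul A y x)) -> I a.

(* (Q, p) is a presentation of the commutativization A_com = A / [A,A]: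
   p : A -> Q is a surjective algebra morphism whose kernel is exactly the
   ideal generated by the commutators. *)
Definition is_commutativization (F : fieldType) (A Q : algebra F) (p : A -> Q) : Prop :=
  [/\ is_alg_morph p,
      (forall q : Q, exists a : A, p a = q)
    & (forall a : A, p a = 0 <-> in_comm_ideal a)].

From mathcomp Require Import all_boot all_order all_algebra.
Set Implicit Arguments. Unset Strict Implicit. Unset Printing Implicit Defensive.
Import GRing.Theory.
Local Open Scope ring_scope.

(* A morphism phi : A -> C[x] into a commutative algebra kills every
   commutator, hence the whole commutator ideal, which is the kernel of
   p : A -> A_com.  Since p is surjective, phi therefore factors as psi o p
   with psi : A_com -> C[x] again a morphism, so phi a is constant as soon as
   p a lies in P^c(A_com).  Conversely every morphism A_com -> C[x] composed
   with p is a morphism A -> C[x]. *)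

Section LinearFun.
Variables (F : fieldType) (U V : lmodType F) (f : U -> V).
Hypothesis f_linear : linear f.

Lemma linear_fun0 : f 0 = 0.
Proof.
apply: (@addrI _ (f 0)); rewrite addr0.
by have := f_linear 1 0 0; rewrite !scale1r addr0.
Qed.

Lemma linear_funB x y : f (x - y) = f x - f y.
Proof. by rewrite addrC [RHS]addrC -!scaleN1r f_linear. Qed.

End LinearFun.

Section AlgebraMul.
Variables (F : fieldType) (A : algebra F).

Lemma amulr_linear (x : A) : linear (amul A x).
Proof. by move=> k y z; rewrite amulDr amulZr. Qed.

Lemma amull_linear (y : A) : linear (amul A ^~ y).
Proof. by move=> k x z; rewrite /= amulDl amulZl. Qed.

Lemma amulr0 (x : A) : amul A x 0 = 0.
Proof. exact: linear_fun0 (amulr_linear x). Qed.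

Lemma amul0r (y : A) : amul A 0 y = 0.
Proof. exact: linear_fun0 (amull_linear y). Qed.

End AlgebraMul.

Section PolyMorph.
Variables (F : fieldType) (A C : algebra F) (phi : A -> nat -> C).
Hypothesis phi_morph : poly_morph phi.

Lemma poly_morph_coef_linear n : linear (phi ^~ n).
Proof. by case: phi_morph => _ phiL _ k a b; apply: phiL. Qed.

Lemma poly_morph0 n : phi 0 n = 0.
Proof. exact: (linear_fun0 (poly_morph_coef_linear n)). Qed.

Lemma poly_morphB a b n : phi (a - b) n = phi a n - phi b n.
Proof. exact: (linear_funB (poly_morph_coef_linear n) a b). Qed.

Lemma poly_morph_comp (B : algebra F) (f : B -> A) :
  is_alg_morph f -> poly_morph (fun b => phi (f b)).
Proof.
case: phi_morph => phi_fin phiL phiM [fL fM]; split.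
- by move=> b; apply: phi_fin.
- by move=> k b c n; rewrite fL phiL.
- by move=> b c n; rewrite fM phiM.
Qed.

Hypothesis C_comm : is_commutative C.

(* The two convolution sums defining phi (xy) and phi (yx) agree after
   reversing the summation index. *)
Lemma poly_morph_commutator x y n : phi (amul A x y - amul A y x) n = 0.
Proof.
case: phi_morph => _ _ phiM.
apply/eqP; rewrite poly_morphB !phiM subr_eq0; apply/eqP.
rewrite [RHS](reindex_inj rev_ord_inj) /=.
apply: eq_bigr => i _; rewrite subSS subKn; last by rewrite -ltnS.
exact: C_comm.
Qed.

Lemma poly_morph_comm_ideal a : in_comm_ideal a -> forall n, phi a n = 0.
Proof.
move=> a_in; apply: (a_in (fun b => forall n, phi b n = 0));
  last exact: poly_morph_commutator.
case: phi_morph => _ phiL phiM; split.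
- exact: poly_morph0.
- by move=> k x y x0 y0 n; rewrite phiL x0 y0 scaler0 addr0.
- by move=> x y y0 n; rewrite phiM; apply: big1 => i _; rewrite y0 amulr0.
- by move=> x y x0 n; rewrite phiM; apply: big1 => i _; rewrite x0 amul0r.
Qed.

End PolyMorph.

Lemma Pc_alg_morph (F : fieldType) (A B : algebra F) (f : A -> B) (a : A) :
  is_alg_morph f -> Pc a -> Pc (f a).
Proof.
by move=> f_morph Pa C C_comm psi psi_morph; apply: Pa (poly_morph_comp _ f_morph).
Qed.

Lemma poly_morph_factor (F : fieldType) (A Q C : algebra F) (p : A -> Q)
    (phi : A -> nat -> C) :
  is_alg_morph p -> (forall q, exists a, p a = q) -> poly_morph phi ->
  (forall a, p a = 0 -> forall n, phi a n = 0) ->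
  exists2 psi : Q -> nat -> C, poly_morph psi & forall a n, phi a n = psi (p a) n.
Proof.
move=> [pL pM] p_surj [phi_fin phiL phiM] ker_phi.
have p_surjb q : exists a, p a == q by have [a <-] := p_surj q; exists a.
pose s q := xchoose (p_surjb q).
have sK q : p (s q) = q by apply/eqP/(xchooseP (p_surjb q)).
have phi_p_eq a b n : p a = p b -> phi a n = phi b n.
  move=> eq_ab; apply/eqP; rewrite -subr_eq0.
  rewrite -(poly_morphB (And3 phi_fin phiL phiM)); apply/eqP/ker_phi.
  by rewrite (linear_funB pL) eq_ab subrr.
exists (fun q => phi (s q)); last by move=> a n; apply: phi_p_eq; rewrite sK.
split.
- by move=> q; apply: phi_fin.
- by move=> k q r n; rewrite -phiL; apply: phi_p_eq; rewrite pL !sK.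
- by move=> q r n; rewrite -phiM; apply: phi_p_eq; rewrite pM !sK.
Qed.

Theorem mainTheorem11 (F : fieldType) (A Q : algebra F) (p : A -> Q) :
  is_commutativization p ->
  forall a : A, Pc a <-> Pc (p a).
Proof.
case=> p_morph p_surj p_ker a; split; first exact: Pc_alg_morph.
move=> Ppa C C_comm phi phi_morph.
have ker_phi b : p b = 0 -> forall n, phi b n = 0.
  by move=> /p_ker; apply: poly_morph_comm_ideal.
have [psi psi_morph phi_psi] := poly_morph_factor p_morph p_surj phi_morph ker_phi.
by move=> n n_gt0; rewrite phi_psi; apply: Ppa.
Qed.
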